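(* Let $T \in \mathbb{R}^n \otimes \mathbb{R}^n \otimes \mathbb{R}^n$ be a real tensor with complex subrank $Q_{\mathbb{C}}(T) = n$. Then $Q(T) \geq n/2$.
   Context: For $r \geq 0$ let $I_r := \sum_{j=1}^r e_j \otimes e_j \otimes e_j$. The (real) subrank of $T \in \mathbb{R}^{n_1} \otimes \mathbb{R}^{n_2} \otimes \mathbb{R}^{n_3}$ is $Q(T) := \max\{ r \mid \exists\ \mathbb{R}\text{-linear } \varphi_i : \mathbb{R}^{n_i} \to \mathbb{R}^r,\ (\varphi_1 \otimes \varphi_2 \otimes \varphi_3) T = I_r\}$. The complex subrank $Q_{\mathbb{C}}(T)$ is defined the same way but allowing $\mathbb{C}$-linear maps $\varphi_i : \mathbb{C}^{n_i} \to \mathbb{C}^r$. *)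

From HB Require Import structures.
From mathcomp Require Import all_boot all_order all_algebra.
From mathcomp Require Import reals.
From mathcomp Require Import complex.
Set Implicit Arguments. Unset Strict Implicit. Unset Printing Implicit Defensive.
Import Order.TTheory GRing.Theory Num.Theory.
Local Open Scope ring_scope.

Definition tensor3 (K : Type) (n1 n2 n3 : nat) := 'I_n1 -> 'I_n2 -> 'I_n3 -> K.

Definition unit_tensor (K : nzRingType) (r : nat) : tensor3 K r r r :=
  fun a b c => if (a == b) && (b == c) then 1 else 0.

(* (phi1 ⊗ phi2 ⊗ phi3) T, where phi_k : K^{n_k} -> K^r is the K-linear map
   given by the matrix A_k : 'M_(r, n_k). *)
Definition tensor_apply (K : nzRingType) (n1 n2 n3 r : nat)
  (A1 : 'M[K]_(r, n1)) (A2 : 'M[K]_(r, n2)) (A3 : 'M[K]_(r, n3))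
  (T : tensor3 K n1 n2 n3) : tensor3 K r r r :=
  fun a b c => \sum_(i < n1) \sum_(j < n2) \sum_(k < n3)
                 A1 a i * A2 b j * A3 c k * T i j k.

Definition restricts_to_unit (K : nzRingType) (n1 n2 n3 : nat)
  (T : tensor3 K n1 n2 n3) (r : nat) : Prop :=
  exists (A1 : 'M[K]_(r, n1)) (A2 : 'M[K]_(r, n2)) (A3 : 'M[K]_(r, n3)),
    tensor_apply A1 A2 A3 T = @unit_tensor K r.

(* "Q(T) = m" for the subrank over K:  m is the maximum r with T restricting to I_r. *)
Definition subrank_eq (K : nzRingType) (n1 n2 n3 : nat)
  (T : tensor3 K n1 n2 n3) (m : nat) : Prop :=
  restricts_to_unit T m /\ (forall r, restricts_to_unit T r -> (r <= m)%N).

(* "Q(T) >= x": some r >= x with T restricting to I_r (equivalent since Q is a max). *)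

Definition complexify (R : rcfType) (n1 n2 n3 : nat) (T : tensor3 R n1 n2 n3)
  : tensor3 R[i] n1 n2 n3 := fun i j k => (T i j k)%:C%C.

From HB Require Import structures.
From mathcomp Require Import all_boot all_order all_algebra.
From mathcomp Require Import reals.
From mathcomp Require Import complex.
From Stdlib Require Import FunctionalExtensionality.
From mathcomp Require Import lra.
Set Implicit Arguments. Unset Strict Implicit. Unset Printing Implicit Defensive.
Import Order.TTheory GRing.Theory Num.Theory.
Local Open Scope ring_scope.

(* Let (A1 ⊗ A2 ⊗ A3) T = I_n over C. The A_k are invertible and, T being
   real, the conjugate matrices also restrict T to I_n, so the matrices
   N_k := conj(A_k) A_k^-1 satisfy (N1 ⊗ N2 ⊗ N3) I_n = I_n and
   conj(N_k) N_k = 1. These two facts force N1, N2, N3 to be monomial with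
   the support of one involution of {0..n-1}. Pick the least element s of
   each orbit (there are at least n/2 of them) and the real row vectors
   2 Re(λ_s A_k(s,-)) = λ_s A_k(s,-) + conj(λ_s) (N_k A_k)(s,-): they map T to
   a diagonal tensor with nonzero diagonal, which rescales to I_r. *)

Lemma tensor3P (K : Type) n1 n2 n3 (T U : tensor3 K n1 n2 n3) :
  (forall i j k, T i j k = U i j k) -> T = U.
Proof.
move=> TU; do 3![apply: functional_extensionality_dep => ?]; exact: TU.
Qed.

Lemma sum_nat_eq_mull (K : pzSemiRingType) n (F : 'I_n -> K) (a : 'I_n) :
  \sum_j (a == j)%:R * F j = F a.
Proof.
rewrite (bigD1 a) //= eqxx mul1r big1 ?addr0 // => j.
by rewrite eq_sym => /negPf->; rewrite mul0r.
Qed.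

Section ModeProducts.
Variable K : comNzRingType.

Definition mode1 n1 n2 n3 r (X : 'M[K]_(r, n1)) (T : tensor3 K n1 n2 n3)
  : tensor3 K r n2 n3 := fun a j k => \sum_i X a i * T i j k.
Definition mode2 n1 n2 n3 r (X : 'M[K]_(r, n2)) (T : tensor3 K n1 n2 n3)
  : tensor3 K n1 r n3 := fun i b k => \sum_j X b j * T i j k.
Definition mode3 n1 n2 n3 r (X : 'M[K]_(r, n3)) (T : tensor3 K n1 n2 n3)
  : tensor3 K n1 n2 r := fun i j c => \sum_k X c k * T i j k.

Lemma tensor_applyE n1 n2 n3 r (A1 : 'M[K]_(r, n1)) (A2 : 'M[K]_(r, n2))
    (A3 : 'M[K]_(r, n3)) (T : tensor3 K n1 n2 n3) :
  tensor_apply A1 A2 A3 T = mode1 A1 (mode2 A2 (mode3 A3 T)).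
Proof.
apply: tensor3P => a b c; apply: eq_bigr => i _.
rewrite mulr_sumr; apply: eq_bigr => j _.
by rewrite !mulr_sumr; apply: eq_bigr => k _; rewrite !mulrA.
Qed.

Lemma mode12C n1 n2 n3 r s (X : 'M[K]_(r, n1)) (Y : 'M[K]_(s, n2))
    (T : tensor3 K n1 n2 n3) :
  mode1 X (mode2 Y T) = mode2 Y (mode1 X T).
Proof.
apply: tensor3P => a b c; rewrite /mode1 /mode2.
under eq_bigr do rewrite mulr_sumr.
rewrite exchange_big; apply: eq_bigr => j _; rewrite mulr_sumr.
by apply: eq_bigr => i _; rewrite mulrCA.
Qed.

Lemma mode13C n1 n2 n3 r s (X : 'M[K]_(r, n1)) (Y : 'M[K]_(s, n3))
    (T : tensor3 K n1 n2 n3) :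
  mode1 X (mode3 Y T) = mode3 Y (mode1 X T).
Proof.
apply: tensor3P => a b c; rewrite /mode1 /mode3.
under eq_bigr do rewrite mulr_sumr.
rewrite exchange_big; apply: eq_bigr => k _; rewrite mulr_sumr.
by apply: eq_bigr => i _; rewrite mulrCA.
Qed.

Lemma mode23C n1 n2 n3 r s (X : 'M[K]_(r, n2)) (Y : 'M[K]_(s, n3))
    (T : tensor3 K n1 n2 n3) :
  mode2 X (mode3 Y T) = mode3 Y (mode2 X T).
Proof.
apply: tensor3P => a b c; rewrite /mode2 /mode3.
under eq_bigr do rewrite mulr_sumr.
rewrite exchange_big; apply: eq_bigr => k _; rewrite mulr_sumr.
by apply: eq_bigr => j _; rewrite mulrCA.
Qed.

Lemma mode1M n1 n2 n3 r s (C : 'M[K]_(s, r)) (A : 'M[K]_(r, n1))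
    (T : tensor3 K n1 n2 n3) :
  mode1 (C *m A) T = mode1 C (mode1 A T).
Proof.
apply: tensor3P => a j k; rewrite /mode1.
under eq_bigr do rewrite mxE mulr_suml.
rewrite exchange_big; apply: eq_bigr => x _; rewrite mulr_sumr.
by apply: eq_bigr => i _; rewrite mulrA.
Qed.

Lemma mode2M n1 n2 n3 r s (C : 'M[K]_(s, r)) (A : 'M[K]_(r, n2))
    (T : tensor3 K n1 n2 n3) :
  mode2 (C *m A) T = mode2 C (mode2 A T).
Proof.
apply: tensor3P => i b k; rewrite /mode2.
under eq_bigr do rewrite mxE mulr_suml.
rewrite exchange_big; apply: eq_bigr => y _; rewrite mulr_sumr.
by apply: eq_bigr => j _; rewrite mulrA.
Qed.

Lemma mode3M n1 n2 n3 r s (C : 'M[K]_(s, r)) (A : 'M[K]_(r, n3))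
    (T : tensor3 K n1 n2 n3) :
  mode3 (C *m A) T = mode3 C (mode3 A T).
Proof.
apply: tensor3P => i j c; rewrite /mode3.
under eq_bigr do rewrite mxE mulr_suml.
rewrite exchange_big; apply: eq_bigr => z _; rewrite mulr_sumr.
by apply: eq_bigr => k _; rewrite mulrA.
Qed.

End ModeProducts.

Lemma tensor_applyM (K : comNzRingType) n1 n2 n3 r s (C1 C2 C3 : 'M[K]_(s, r))
    (A1 : 'M[K]_(r, n1)) (A2 : 'M[K]_(r, n2)) (A3 : 'M[K]_(r, n3))
    (T : tensor3 K n1 n2 n3) :
  tensor_apply (C1 *m A1) (C2 *m A2) (C3 *m A3) T
  = tensor_apply C1 C2 C3 (tensor_apply A1 A2 A3 T).
Proof.
rewrite !tensor_applyE mode1M mode2M mode3M; congr (mode1 C1 _).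
rewrite mode12C; congr (mode2 C2 _).
by rewrite mode23C mode13C mode12C.
Qed.

Definition trot (K : Type) n1 n2 n3 (T : tensor3 K n1 n2 n3) : tensor3 K n2 n3 n1 :=
  fun j k i => T i j k.

Lemma tensor_apply_rot (K : comNzRingType) n1 n2 n3 r (A1 : 'M[K]_(r, n1))
    (A2 : 'M[K]_(r, n2)) (A3 : 'M[K]_(r, n3)) (T : tensor3 K n1 n2 n3) :
  tensor_apply A2 A3 A1 (trot T) = trot (tensor_apply A1 A2 A3 T).
Proof.
apply: tensor3P => b c a; rewrite /trot /tensor_apply.
under eq_bigr do rewrite exchange_big.
rewrite exchange_big; apply: eq_bigr => i _; apply: eq_bigr => j _.
by apply: eq_bigr => k _; rewrite [_ * A1 a i]mulrC !mulrA.
Qed.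

Lemma trot_unit (K : nzRingType) r : trot (@unit_tensor K r) = @unit_tensor K r.
Proof.
apply: tensor3P => b c a; rewrite /trot /unit_tensor.
case: (eqVneq a b) => [<-|ab]; first by rewrite [c == a]eq_sym andbb.
by case: eqP => // <-; rewrite eq_sym (negPf ab).
Qed.

Lemma tensor_apply_unit (K : comNzRingType) n r (X Y Z : 'M[K]_(r, n)) a b c :
  tensor_apply X Y Z (@unit_tensor K n) a b c = \sum_j X a j * Y b j * Z c j.
Proof.
apply: eq_bigr => i _; rewrite /unit_tensor (bigD1 i) //= [X in _ + X]big1.
  rewrite addr0 (bigD1 i) //= [X in _ + X]big1 ?eqxx ?mulr1 ?addr0 // => k /negPf ki.
  by rewrite eq_sym ki mulr0.
by move=> j /negPf ji; apply: big1 => k _; rewrite eq_sym ji mulr0.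
Qed.

Lemma unit_restriction_rot (K : comNzRingType) n1 n2 n3 r (A1 : 'M[K]_(r, n1))
    (A2 : 'M[K]_(r, n2)) (A3 : 'M[K]_(r, n3)) (T : tensor3 K n1 n2 n3) :
  tensor_apply A1 A2 A3 T = @unit_tensor K r ->
  tensor_apply A2 A3 A1 (trot T) = @unit_tensor K r.
Proof. by move=> HA; rewrite tensor_apply_rot HA trot_unit. Qed.

Lemma unit_tensor_stab_rot (K : comNzRingType) n (N1 N2 N3 : 'M[K]_n) :
  tensor_apply N1 N2 N3 (@unit_tensor K n) = @unit_tensor K n ->
  tensor_apply N2 N3 N1 (@unit_tensor K n) = @unit_tensor K n.
Proof. by move=> N_stab; rewrite -{1}trot_unit; apply: unit_restriction_rot. Qed.

Lemma tensor_apply_unitmx1 (K : comUnitRingType) n (A1 A2 A3 : 'M[K]_n)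
    (T : tensor3 K n n n) :
  tensor_apply A1 A2 A3 T = @unit_tensor K n -> A1 \in unitmx.
Proof.
move=> HA; pose W := \matrix_(i, b) \sum_j \sum_k A2 b j * A3 b k * T i j k.
suff /mulmx1_unit[] : A1 *m W = 1%:M by [].
apply/matrixP => a b; rewrite !mxE.
have -> : (a == b)%:R = @unit_tensor K n a b b.
  by rewrite /unit_tensor eqxx andbT; case: (a == b).
rewrite -HA; apply: eq_bigr => i _; rewrite mxE mulr_sumr; apply: eq_bigr => j _.
by rewrite mulr_sumr; apply: eq_bigr => k _; rewrite !mulrA.
Qed.

Lemma tensor_apply_unitmx (K : comUnitRingType) n (A1 A2 A3 : 'M[K]_n)
    (T : tensor3 K n n n) :
  tensor_apply A1 A2 A3 T = @unit_tensor K n ->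
  [/\ A1 \in unitmx, A2 \in unitmx & A3 \in unitmx].
Proof.
move=> HA; have HA2 := unit_restriction_rot HA; have HA3 := unit_restriction_rot HA2.
by split; [apply: tensor_apply_unitmx1 HA | apply: tensor_apply_unitmx1 HA2
          | apply: tensor_apply_unitmx1 HA3].
Qed.

Definition map_tensor (K L : Type) (f : K -> L) n1 n2 n3 (T : tensor3 K n1 n2 n3)
  : tensor3 L n1 n2 n3 := fun i j k => f (T i j k).

Lemma map_tensor_apply (K L : comNzRingType) (f : {rmorphism K -> L}) n1 n2 n3 r
    (A1 : 'M[K]_(r, n1)) (A2 : 'M[K]_(r, n2)) (A3 : 'M[K]_(r, n3))
    (T : tensor3 K n1 n2 n3) :
  map_tensor f (tensor_apply A1 A2 A3 T)
  = tensor_apply (map_mx f A1) (map_mx f A2) (map_mx f A3) (map_tensor f T).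
Proof.
apply: tensor3P => a b c; rewrite /map_tensor rmorph_sum; apply: eq_bigr => i _.
rewrite rmorph_sum; apply: eq_bigr => j _; rewrite rmorph_sum; apply: eq_bigr => k _.
by rewrite !rmorphM !mxE.
Qed.

Lemma map_unit_tensor (K L : nzRingType) (f : {rmorphism K -> L}) r :
  map_tensor f (@unit_tensor K r) = @unit_tensor L r.
Proof.
apply: tensor3P => a b c; rewrite /map_tensor /unit_tensor.
by case: ifP; rewrite ?rmorph1 ?rmorph0.
Qed.

Lemma unit_tensor_stab_entry (K : comNzRingType) n (N1 N2 N3 M2 M3 : 'M[K]_n) :
  tensor_apply N1 N2 N3 (@unit_tensor K n) = @unit_tensor K n ->
  M2 *m N2 = 1%:M -> M3 *m N3 = 1%:M ->
  forall a m m', N1 a m * (m' == m)%:R = M2 m a * M3 m' a.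
Proof.
move=> N_stab M2N2 M3N3 a m m'.
have := congr1 (fun U => U a m m')
  (tensor_applyM 1%:M M2 M3 N1 N2 N3 (@unit_tensor K n)).
rewrite /= N_stab mul1mx M2N2 M3N3 !tensor_apply_unit.
under eq_bigr do rewrite !mxE mulrAC mulrC.
under [in X in _ = X -> _]eq_bigr do rewrite !mxE -mulrA.
by rewrite !sum_nat_eq_mull.
Qed.

Section UnitTensorStabilizer.
Variables (K : idomainType) (n : nat) (N1 N2 N3 M2 M3 : 'M[K]_n).
Hypothesis N_stab : tensor_apply N1 N2 N3 (@unit_tensor K n) = @unit_tensor K n.
Hypotheses (M2N2 : M2 *m N2 = 1%:M) (M3N3 : M3 *m N3 = 1%:M).

Let stab_entry := unit_tensor_stab_entry N_stab M2N2 M3N3.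

Lemma unit_tensor_stab_supp a m : N1 a m != 0 -> (M2 m a != 0) && (M3 m a != 0).
Proof.
by have := stab_entry a m m; rewrite eqxx mulr1 => ->; rewrite mulf_eq0 negb_or.
Qed.

Lemma unit_tensor_stab_row_uniq a m m' : N1 a m != 0 -> N1 a m' != 0 -> m = m'.
Proof.
move=> /unit_tensor_stab_supp/andP[M2ma _] /unit_tensor_stab_supp/andP[_ M3m'a].
apply/eqP; apply: contraTT (mulf_neq0 M2ma M3m'a) => mm'.
by rewrite negbK -stab_entry [m' == m]eq_sym (negPf mm') mulr0.
Qed.

End UnitTensorStabilizer.

Section PartialInvolution.
Variables (n : nat) (Z : rel 'I_n).
Hypothesis Zsym : forall a m, Z a m -> Z m a.
Hypothesis Zfun : forall a m m', Z a m -> Z a m' -> m = m'.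

Definition min_reps : {set 'I_n} := [set a | [forall m, Z a m ==> (a <= m)%N]].

Definition partner a := odflt a [pick m | Z a m].

Lemma partnerE a m : Z a m -> partner a = m.
Proof.
rewrite /partner => Zam.
by case: pickP => [m' /Zfun/(_ Zam)-> | /(_ m)] //; rewrite Zam.
Qed.

Lemma leq_card_min_reps : (n <= 2 * #|min_reps|)%N.
Proof.
have reps_partner : ~: min_reps \subset partner @: min_reps.
  apply/subsetP => a; rewrite !inE negb_forall => /existsP[m].
  rewrite negb_imply -ltnNge => /andP[Zam lt_ma].
  apply/imsetP; exists m; last by rewrite (partnerE (Zsym Zam)).
  rewrite inE; apply/forallP => m'; apply/implyP => Zmm'.
  by rewrite -(Zfun (Zsym Zam) Zmm') ltnW.
rewrite -[X in (X <= _)%N]card_ord -(cardsC min_reps) mul2n -addnn leq_add2l.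
exact: leq_trans (subset_leq_card reps_partner) (leq_imset_card _ _).
Qed.

Lemma min_reps_orbit_uniq s t m : s \in min_reps -> t \in min_reps ->
  (s == m) || Z s m -> (t == m) || Z t m -> s = t.
Proof.
have reps_uniq x y : x \in min_reps -> y \in min_reps -> Z x y -> x = y.
  rewrite !inE => /forallP/(_ y) xy /forallP/(_ x) yx Zxy.
  by apply/val_inj/eqP; rewrite eqn_leq (implyP xy Zxy) (implyP yx (Zsym Zxy)).
move=> Ss St /orP[/eqP<- | Zsm] /orP[/eqP tm | Ztm].
- by rewrite tm.
- exact/esym/(reps_uniq t s St Ss).
- by rewrite -tm in Zsm; exact: reps_uniq Ss St Zsm.
- exact: Zfun (Zsym Zsm) (Zsym Ztm).
Qed.

End PartialInvolution.

Definition mx_supp (K : nzRingType) n (N : 'M[K]_n) : rel 'I_n :=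
  fun a m => N a m != 0.

Section ComplexMatrices.
Variable R : rcfType.

Definition conjc_mx m n (A : 'M[R[i]]_(m, n)) := map_mx (@conjc R) A.

Lemma conj_stab_supp_cycle n (N1 N2 N3 : 'M[R[i]]_n) :
  tensor_apply N1 N2 N3 (@unit_tensor _ n) = @unit_tensor _ n ->
  conjc_mx N2 *m N2 = 1%:M -> conjc_mx N3 *m N3 = 1%:M ->
  forall a m, N1 a m != 0 -> N2 m a != 0.
Proof.
move=> N_stab N2K N3K a m /(unit_tensor_stab_supp N_stab N2K N3K)/andP[].
by rewrite mxE conjc_eq0.
Qed.

Definition twist (mu : R[i]) : R[i] := if mu == -1 then 'i%C else 1.

Lemma twist_neq0 mu : twist mu + conjc (twist mu) * mu != 0.
Proof.
rewrite /twist; case: (eqVneq mu (-1)) => [->|mu_neq].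
  by apply/eqP => /(congr1 (@complex.Im R)) /=; lra.
by rewrite rmorph1 mul1r addr_eq0; apply: contra mu_neq => /eqP->; rewrite opprK.
Qed.

Definition realizer n (N : 'M[R[i]]_n) : 'M[R[i]]_n :=
  \matrix_(s, m) (twist (N s s) * (s == m)%:R + conjc (twist (N s s)) * N s m).

Lemma realizer_supp n (N : 'M[R[i]]_n) s m :
  realizer N s m != 0 -> (s == m) || (N s m != 0).
Proof.
rewrite mxE; apply: contraR; rewrite negb_or negbK => /andP[/negPf-> /eqP->].
by rewrite !mulr0 addr0.
Qed.

Definition real_rows n (N A : 'M[R[i]]_n) : 'M[R]_n :=
  \matrix_(s, j) (complex.Re (twist (N s s) * A s j) *+ 2).

Lemma real_rowsE n (N A : 'M[R[i]]_n) : N *m A = conjc_mx A ->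
  map_mx (real_complex R) (real_rows N A) = realizer N *m A.
Proof.
have Re2 (z : R[i]) : real_complex R (complex.Re z *+ 2) = z + conjc z.
  by rewrite [RHS]splitr -ReJ_add -mulr2n rmorphMn.
move=> NA; apply/matrixP => s j; rewrite !mxE Re2.
under eq_bigr do rewrite mxE mulrDl [twist _ * _ * _]mulrAC [_ * (_ == _)%:R]mulrC.
rewrite big_split /= sum_nat_eq_mull rmorphM /=.
have := congr1 (fun M : 'M_n => M s j) NA; rewrite !mxE => <-.
by rewrite mulr_sumr; congr (_ + _); apply: eq_bigr => m _; rewrite mulrA.
Qed.

End ComplexMatrices.

Section ConjugateStabilizer.
Variables (R : rcfType) (n : nat) (N1 N2 N3 : 'M[R[i]]_n).
Hypothesis N_stab : tensor_apply N1 N2 N3 (@unit_tensor _ n) = @unit_tensor _ n.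
Hypotheses (N1K : conjc_mx N1 *m N1 = 1%:M) (N2K : conjc_mx N2 *m N2 = 1%:M)
  (N3K : conjc_mx N3 *m N3 = 1%:M).

Let N_stab231 := unit_tensor_stab_rot N_stab.
Let N_stab312 := unit_tensor_stab_rot N_stab231.
Let supp12 := conj_stab_supp_cycle N_stab N2K N3K.
Let supp23 := conj_stab_supp_cycle N_stab231 N3K N1K.
Let supp31 := conj_stab_supp_cycle N_stab312 N1K N2K.

Lemma conj_stab_supp_sym a m : N1 a m != 0 -> N1 m a != 0.
Proof. by move=> /supp12/supp23/supp31. Qed.

Lemma conj_stab_supp_uniq a m m' : N1 a m != 0 -> N1 a m' != 0 -> m = m'.
Proof. exact: (unit_tensor_stab_row_uniq N_stab N2K N3K). Qed.

Lemma conj_stab_supp2 a m : (N2 a m != 0) = (N1 a m != 0).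
Proof. by apply/idP/idP => [/supp23/supp31 | /conj_stab_supp_sym/supp12]. Qed.

Lemma conj_stab_supp3 a m : (N3 a m != 0) = (N1 a m != 0).
Proof. by apply/idP/idP => [/supp31/conj_stab_supp_sym | /supp12/supp23]. Qed.

Local Notation S := (min_reps (mx_supp N1)).

Lemma realizer_stab_offdiag s t u : s \in S -> t \in S -> u \in S ->
  ~~ ((s == t) && (t == u)) ->
  \sum_m realizer N1 s m * realizer N2 t m * realizer N3 u m = 0.
Proof.
move=> Ss St Su neq; apply: big1 => m _; apply/eqP; apply: contraR neq.
rewrite !mulf_eq0 !negb_or => /andP[/andP[]].
move=> /realizer_supp s_m /realizer_supp; rewrite conj_stab_supp2 => t_m.
move=> /realizer_supp; rewrite conj_stab_supp3 => u_m.
have orbit_uniq := min_reps_orbit_uniq conj_stab_supp_sym conj_stab_supp_uniq.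
by rewrite (orbit_uniq s t m Ss St s_m t_m) (orbit_uniq t u m St Su t_m u_m) !eqxx.
Qed.

Lemma realizer_stab_fixed s : N1 s s != 0 ->
  \sum_m realizer N1 s m * realizer N2 s m * realizer N3 s m != 0.
Proof.
move=> N1ss; rewrite (bigD1 s) //= big1 ?addr0 => [|m ms].
  by rewrite !mxE eqxx !mulr1 !mulf_neq0 ?twist_neq0.
case: (eqVneq (N1 s m) 0) => [N1sm | /(conj_stab_supp_uniq N1ss) sm].
  by rewrite mxE [s == m]eq_sym (negPf ms) N1sm !mulr0 addr0 !mul0r.
by rewrite sm eqxx in ms.
Qed.

Lemma realizer_stab_moved s : N1 s s = 0 ->
  \sum_m realizer N1 s m * realizer N2 s m * realizer N3 s m = 2.
Proof.
move=> N1ss.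
have N2ss : N2 s s = 0.
  by apply/eqP; rewrite -[_ == 0]negbK conj_stab_supp2 N1ss eqxx.
have N3ss : N3 s s = 0.
  by apply/eqP; rewrite -[_ == 0]negbK conj_stab_supp3 N1ss eqxx.
have twist0 : twist (0 : R[i]) = 1 by rewrite /twist eq_sym oppr_eq0 oner_eq0.
have sumN : \sum_m N1 s m * N2 s m * N3 s m = 1.
  by rewrite -tensor_apply_unit N_stab /unit_tensor !eqxx.
transitivity (\sum_m ((s == m)%:R * 1 + N1 s m * N2 s m * N3 s m)).
  apply: eq_bigr => m _; rewrite !mxE N1ss N2ss N3ss twist0 rmorph1 !mul1r.
  by case: eqP => [<-|_]; rewrite ?N1ss ?N2ss ?N3ss !(addr0, add0r, mulr1, mul0r).
by rewrite big_split /= sum_nat_eq_mull sumN -mulr2n.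
Qed.

Lemma realizer_stab_supp s t u : s \in S -> t \in S -> u \in S ->
  (\sum_m realizer N1 s m * realizer N2 t m * realizer N3 u m != 0)
  = (s == t) && (t == u).
Proof.
move=> Ss St Su.
case: (boolP ((s == t) && (t == u))) => [/andP[/eqP<- /eqP<-] | neq].
  case: (eqVneq (N1 s s) 0) => [/realizer_stab_moved-> | /realizer_stab_fixed ->] //.
  by rewrite pnatr_eq0.
by rewrite realizer_stab_offdiag ?eqxx.
Qed.

End ConjugateStabilizer.

Lemma restricts_to_unit_diag (F : fieldType) n1 n2 n3 r (B1 : 'M[F]_(r, n1))
    (B2 : 'M[F]_(r, n2)) (B3 : 'M[F]_(r, n3)) (T : tensor3 F n1 n2 n3)
    (S : {set 'I_r}) :
  (forall x y z, x \in S -> y \in S -> z \in S ->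
    (tensor_apply B1 B2 B3 T x y z != 0) = (x == y) && (y == z)) ->
  restricts_to_unit T #|S|.
Proof.
set U := tensor_apply B1 B2 B3 T => U_diag.
pose io (x : 'I_#|S|) : 'I_r := enum_val x.
pose d x := (U (io x) (io x) (io x))^-1.
exists (\matrix_(x, i) (d x * B1 (io x) i)), (\matrix_(y, j) B2 (io y) j),
  (\matrix_(z, k) B3 (io z) k).
apply: tensor3P => x y z.
have -> : tensor_apply (\matrix_(x, i) (d x * B1 (io x) i))
    (\matrix_(y, j) B2 (io y) j) (\matrix_(z, k) B3 (io z) k) T x y z
    = d x * U (io x) (io y) (io z).
  rewrite /U /tensor_apply mulr_sumr; apply: eq_bigr => i _.
  rewrite mulr_sumr; apply: eq_bigr => j _; rewrite mulr_sumr; apply: eq_bigr => k _.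
  by rewrite !mxE !mulrA.
have := U_diag _ _ _ (enum_valP x) (enum_valP y) (enum_valP z).
rewrite /unit_tensor !(inj_eq enum_val_inj) -/(io x) -/(io y) -/(io z).
case: ifP => [/andP[/eqP<- /eqP<-] Ux | _ /eqP->]; last by rewrite mulr0.
by rewrite mulVf.
Qed.

Lemma conjc_complexify (R : rcfType) n1 n2 n3 (T : tensor3 R n1 n2 n3) :
  map_tensor (@conjc R) (complexify T) = complexify T.
Proof. by apply: tensor3P => i j k; exact: conjc_real. Qed.

Definition conj_ratio (R : rcfType) n (A : 'M[R[i]]_n) := conjc_mx A *m invmx A.

Lemma conj_ratio_mul (R : rcfType) n (A : 'M[R[i]]_n) :
  A \in unitmx -> conj_ratio A *m A = conjc_mx A.
Proof. by move=> uA; rewrite /conj_ratio mulmxKV. Qed.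

Lemma conj_ratioK (R : rcfType) n (A : 'M[R[i]]_n) :
  A \in unitmx -> conjc_mx (conj_ratio A) *m conj_ratio A = 1%:M.
Proof.
have conjc_mxK : conjc_mx (conjc_mx A) = A.
  by apply/matrixP => i j; rewrite !mxE conjcK.
move=> uA; rewrite /conj_ratio [conjc_mx _]map_mxM -/(conjc_mx _) conjc_mxK.
by rewrite map_invmx -/(conjc_mx _) mulmxA mulmxKV ?mulmxV ?map_unitmx.
Qed.

Section RealRestriction.
Variables (R : rcfType) (n : nat) (T : tensor3 R n n n) (A1 A2 A3 : 'M[R[i]]_n).
Hypothesis HA : tensor_apply A1 A2 A3 (complexify T) = @unit_tensor _ n.
Hypotheses (uA1 : A1 \in unitmx) (uA2 : A2 \in unitmx) (uA3 : A3 \in unitmx).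

Local Notation N1 := (conj_ratio A1).
Local Notation N2 := (conj_ratio A2).
Local Notation N3 := (conj_ratio A3).

Lemma conj_ratio_stab : tensor_apply N1 N2 N3 (@unit_tensor _ n) = @unit_tensor _ n.
Proof.
have HAc : tensor_apply (conjc_mx A1) (conjc_mx A2) (conjc_mx A3) (complexify T)
    = @unit_tensor _ n.
  by rewrite -conjc_complexify -map_tensor_apply HA map_unit_tensor.
by rewrite -{1}HA -tensor_applyM !conj_ratio_mul.
Qed.

Lemma restricts_to_unit_conj_reps : restricts_to_unit T #|min_reps (mx_supp N1)|.
Proof.
pose B1 := real_rows N1 A1; pose B2 := real_rows N2 A2; pose B3 := real_rows N3 A3.
have complexB : complexify (tensor_apply B1 B2 B3 T)
    = tensor_apply (realizer N1) (realizer N2) (realizer N3) (@unit_tensor _ n).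
  rewrite [LHS](map_tensor_apply (real_complex R)) !real_rowsE ?conj_ratio_mul //.
  by rewrite tensor_applyM HA.
apply: (@restricts_to_unit_diag _ _ _ _ _ B1 B2 B3) => s t u Ss St Su.
transitivity (complexify (tensor_apply B1 B2 B3 T) s t u != 0).
  by rewrite /complexify fmorph_eq0.
rewrite complexB tensor_apply_unit.
exact: (realizer_stab_supp conj_ratio_stab
  (conj_ratioK uA1) (conj_ratioK uA2) (conj_ratioK uA3) Ss St Su).
Qed.

End RealRestriction.

Theorem proposition2p3 (R : realType) (n : nat) (T : tensor3 R n n n) :
  subrank_eq (complexify T) n ->
  exists r : nat, (n <= 2 * r)%N /\ restricts_to_unit T r.
Proof.
case=> [[A1 [A2 [A3 HA]]] _].
have [uA1 uA2 uA3] := tensor_apply_unitmx HA.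
have N_stab := conj_ratio_stab HA uA1 uA2 uA3.
have [N1K N2K N3K] := And3 (conj_ratioK uA1) (conj_ratioK uA2) (conj_ratioK uA3).
exists #|min_reps (mx_supp (conj_ratio A1))|; split.
  apply: leq_card_min_reps.
  - exact: conj_stab_supp_sym N_stab N1K N2K N3K.
  - exact: conj_stab_supp_uniq N_stab N2K N3K.
exact: restricts_to_unit_conj_reps HA uA1 uA2 uA3.
Qed.
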